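(* In the setting described in the context, let a stochastic Runge--Kutta method with stages $s$ and random coefficients $Z^{m,n}_{ij}$, $z^{m,n}_i$ be given, and use the same coefficients in the (local) SRK Lawson scheme and in the global SRK Lawson scheme. Then the two schemes produce the same sequence of approximations: $e^{\bar L^0_n}V^0_n=Y_n$ for all $n=0,1,\dots,N$.
   Context: Setting: $d,M\in\mathbb{N}$, $t_0<T$, grid $t_0<t_1<\dots<t_N=T$ with $h=(T-t_0)/N$, $t_n=t_0+nh$. $A_0,\dots,A_M\in\mathbb{R}^{d\times d}$ pairwise commute; $g_m:[t_0,T]\times\mathbb{R}^d\to\mathbb{R}^d$; $\gamma^\star=\tfrac12$ (Itô interpretation) or $\gamma^\star=0$ (Stratonovich interpretation). Set $\Lambda=A_0-\gamma^\star\sum_{m=1}^MA_m^2$, $\tilde g_0=g_0-2\gamma^\star\sum_{m=1}^MA_mg_m$, $\tilde g_m=g_m$ ($m\ge1$). For the SRK coefficients put $c^{n,i}_m=\sum_{j=1}^sZ^{m,n}_{ij}$, $c^n_m=\sum_{i=1}^sz^{m,n}_i$, and assume $c^n_0=h$. Stage equations are assumed uniquely solvable so that both schemes are well defined. Local SRK Lawson scheme: $Y_0=x_0$; for $n=0,\dots,N-1$, with $\Delta L^n_i=\Lambda c^{n,i}_0+\sum_{m=1}^MA_mc^{n,i}_m$ and $\Delta L^n=\Lambda c^n_0+\sum_{m=1}^MA_mc^n_m$, $H_i=Y_n+\sum_{j=1}^s\sum_{m=0}^MZ^{m,n}_{ij}e^{-\Delta L^n_j}\tilde g_m(t_n+c^{n,j}_0,e^{\Delta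 L^n_j}H_j)$, $V^n_{n+1}=Y_n+\sum_{i=1}^s\sum_{m=0}^Mz^{m,n}_ie^{-\Delta L^n_i}\tilde g_m(t_n+c^{n,i}_0,e^{\Delta L^n_i}H_i)$, $Y_{n+1}=e^{\Delta L^n}V^n_{n+1}$. Global SRK Lawson scheme: given $W^0\in\mathbb{R}^{M+1}$ with $W^0_0=t_0$ and $V^0_0=x_0$; for $n=0,\dots,N-1$, with $L^{0,n}_i=\Lambda(t_n+c^{n,i}_0-t_0)+\sum_{m=1}^MA_m(W^n_m+c^{n,i}_m-W^0_m)$, $H^0_i=V^0_n+\sum_{j=1}^s\sum_{m=0}^MZ^{m,n}_{ij}e^{-L^{0,n}_j}\tilde g_m(t_n+c^{n,j}_0,e^{L^{0,n}_j}H^0_j)$, $V^0_{n+1}=V^0_n+\sum_{i=1}^s\sum_{m=0}^Mz^{m,n}_ie^{-L^{0,n}_i}\tilde g_m(t_n+c^{n,i}_0,e^{L^{0,n}_i}H^0_i)$, $W^{n+1}_m=W^n_m+c^n_m$ ($m=0,\dots,M$); its output is $e^{\bar L^0_n}V^0_n$ with $\bar L^0_n=\Lambda(t_n-t_0)+\sum_{m=1}^MA_m(W^n_m-W^0_m)$. *)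

From HB Require Import structures.
From mathcomp Require Import all_boot all_order all_algebra.
From mathcomp Require Import all_classical all_reals all_analysis.
Set Implicit Arguments. Unset Strict Implicit. Unset Printing Implicit Defensive.
Import Order.TTheory GRing.Theory Num.Theory.
Import numFieldNormedType.Exports.
Local Open Scope ring_scope.

Definition mexp (R : realType) (d : nat) (A : 'M[R]_d) : 'M[R]_d :=
  limn (series (fun k : nat => (k`!%:R)^-1 *: A ^+ k)).

(* Data of the SRK Lawson schemes.  Indices m range over 'I_M.+1 = {0,...,M};
   stage indices over 'I_s.  Vectors of R^d are column vectors 'cV[R]_d.
   Z n m i j = Z^{m,n}_{ij},  z n m i = z^{m,n}_i. *)
Section SRKLawson.
Variables (R : realType) (d M s N : nat) (t0 T gam : R).
Variables (A : 'I_M.+1 -> 'M[R]_d) (g : 'I_M.+1 -> R -> 'cV[R]_d -> 'cV[R]_d).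
Variables (Z : nat -> 'I_M.+1 -> 'I_s -> 'I_s -> R) (z : nat -> 'I_M.+1 -> 'I_s -> R).
Variable (W0 : 'I_M.+1 -> R).

Definition step_h : R := (T - t0) / N%:R.
Definition tgrid (n : nat) : R := t0 + n%:R * step_h.

Definition Lam : 'M[R]_d := A ord0 - gam *: \sum_(m < M.+1 | (0 < m)%N) A m ^+ 2.

Definition gtil (m : 'I_M.+1) (t : R) (x : 'cV[R]_d) : 'cV[R]_d :=
  if m == ord0 then
    g ord0 t x - (2 * gam) *: \sum_(k < M.+1 | (0 < k)%N) (A k *m g k t x)
  else g m t x.

Definition cst (n : nat) (i : 'I_s) (m : 'I_M.+1) : R := \sum_(j < s) Z n m i j.
Definition cw (n : nat) (m : 'I_M.+1) : R := \sum_(i < s) z n m i.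

Definition DLst (n : nat) (i : 'I_s) : 'M[R]_d :=
  cst n i ord0 *: Lam + \sum_(m < M.+1 | (0 < m)%N) cst n i m *: A m.
Definition DL (n : nat) : 'M[R]_d :=
  cw n ord0 *: Lam + \sum_(m < M.+1 | (0 < m)%N) cw n m *: A m.

Definition local_incr (n : nat) (coef : 'I_M.+1 -> 'I_s -> R) (Hs : 'I_s -> 'cV[R]_d)
  : 'cV[R]_d :=
  \sum_(j < s) \sum_(m < M.+1)
     coef m j *: (mexp (- DLst n j) *m
        gtil m (tgrid n + cst n j ord0) (mexp (DLst n j) *m Hs j)).

Definition local_stage_eq (n : nat) (y : 'cV[R]_d) (Hs : 'I_s -> 'cV[R]_d) : Prop :=
  forall i : 'I_s, Hs i = y + local_incr n (fun m j => Z n m i j) Hs.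

Definition local_update (n : nat) (y : 'cV[R]_d) (Hs : 'I_s -> 'cV[R]_d) : 'cV[R]_d :=
  mexp (DL n) *m (y + local_incr n (fun m i => z n m i) Hs).

Definition L0st (W : 'I_M.+1 -> R) (n : nat) (i : 'I_s) : 'M[R]_d :=
  (tgrid n + cst n i ord0 - t0) *: Lam
  + \sum_(m < M.+1 | (0 < m)%N) (W m + cst n i m - W0 m) *: A m.

Definition Lbar (W : 'I_M.+1 -> R) (n : nat) : 'M[R]_d :=
  (tgrid n - t0) *: Lam + \sum_(m < M.+1 | (0 < m)%N) (W m - W0 m) *: A m.

Definition global_incr (W : 'I_M.+1 -> R) (n : nat) (coef : 'I_M.+1 -> 'I_s -> R)
  (Hs : 'I_s -> 'cV[R]_d) : 'cV[R]_d :=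
  \sum_(j < s) \sum_(m < M.+1)
     coef m j *: (mexp (- L0st W n j) *m
        gtil m (tgrid n + cst n j ord0) (mexp (L0st W n j) *m Hs j)).

Definition global_stage_eq (W : 'I_M.+1 -> R) (n : nat) (v : 'cV[R]_d)
  (Hs : 'I_s -> 'cV[R]_d) : Prop :=
  forall i : 'I_s, Hs i = v + global_incr W n (fun m j => Z n m i j) Hs.

Definition global_update (W : 'I_M.+1 -> R) (n : nat) (v : 'cV[R]_d)
  (Hs : 'I_s -> 'cV[R]_d) : 'cV[R]_d :=
  v + global_incr W n (fun m i => z n m i) Hs.

End SRKLawson.

From Pilot Require Import Defs.
From HB Require Import structures.
From mathcomp Require Import all_boot all_order all_algebra.
From mathcomp Require Import all_classical all_reals all_analysis.
From mathcomp Require Import ring.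
Set Implicit Arguments. Unset Strict Implicit. Unset Printing Implicit Defensive.
Import Order.TTheory GRing.Theory Num.Theory.
Import numFieldNormedType.Exports.
Local Open Scope classical_set_scope.
Local Open Scope ring_scope.

(* The exponents Lbar_n, L^{0,n}_i, DL^n_i and DL^n are all linear combinations of
   Lambda and A_1, ..., A_M, so they commute pairwise, and e^(X+Y) = e^X e^Y for
   commuting matrices.  Since L^{0,n}_i = Lbar_n + DL^n_i and, because c^n_0 = h,
   Lbar_{n+1} = DL^n + Lbar_n, multiplying the global stage equations by e^Lbar_n
   turns them into the local stage equations for the vectors e^Lbar_n H^0_i.  By
   uniqueness of the local stage values these are the H_i, and the two update rules
   then give e^Lbar_{n+1} V^0_{n+1} = Y_{n+1}. *)

Lemma sum_antidiagonals (V : nmodType) (f : nat -> nat -> V) n :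
  \sum_(k < n) \sum_(i < k.+1) f i (k - i)%N = \sum_(i < n) \sum_(j < n - i) f i j.
Proof.
elim: n => [|n IH]; first by rewrite !big_ord0.
rewrite big_ord_recr /= IH [RHS]big_ord_recr /= subSnn big_ord1.
rewrite [in RHS](eq_bigr (fun i : 'I_n => \sum_(j < n - i) f i j + f i (n - i)%N)).
  by rewrite big_split /= [X in _ + X = _]big_ord_recr /= subnn addrA.
by move=> i _; rewrite subSn ?(ltnW (ltn_ord i)) // big_ord_recr.
Qed.

Section CauchyProduct.
Variable V : pzRingType.

Definition cauchy (a b : nat -> V) (k : nat) : V := \sum_(i < k.+1) a i * b (k - i)%N.

Lemma series_mulB_cauchy (a b : nat -> V) n :
  series a n * series b n - series (cauchy a b) n =
  \sum_(i < n) \sum_(n - i <= j < n) a i * b j.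
Proof.
rewrite /series /cauchy /= !big_mkord.
rewrite (@sum_antidiagonals _ (fun i j => a i * b j)) mulr_suml.
rewrite -sumrB; apply: eq_bigr => i _.
rewrite mulr_sumr -(big_mkord xpredT (fun j => a i * b j)).
by rewrite (big_cat_nat _ (leq_subr i n)) //= big_mkord addrC addrK.
Qed.

End CauchyProduct.

Lemma fact_inv_binomial (F : numFieldType) (k i : nat) : (i <= k)%N ->
  (k`!%:R : F)^-1 * 'C(k, i)%:R = (i`!%:R)^-1 * ((k - i)`!%:R)^-1.
Proof.
move=> ik; have fact_neq0 n : (n`!%:R : F) != 0 by rewrite pnatr_eq0 -lt0n fact_gt0.
have bin_neq0 : ('C(k, i)%:R : F) != 0 by rewrite pnatr_eq0 -lt0n bin_gt0.
rewrite -(bin_fact ik) !natrM; field.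
by rewrite bin_neq0 !fact_neq0.
Qed.

Lemma exp_coeff_binomial (R : realType) (a b : R) :
  exp_coeff (a + b) = cauchy (exp_coeff a) (exp_coeff b).
Proof.
apply: funext => k; rewrite /exp_coeff /cauchy /= addrC exprDn mulr_suml.
apply: eq_bigr => i _; rewrite -mulr_natr.
rewrite [LHS](_ : _ = a ^+ i * b ^+ (k - i) * ((k`!%:R)^-1 * 'C(k, i)%:R)); last by ring.
by rewrite (@fact_inv_binomial _ k i (ltn_ord i)); ring.
Qed.

Section MatrixNorm.
Variable R : realType.

Lemma mx_norm_entry m n (P : 'M[R]_(m, n)) i j : `|P i j| <= `|P|.
Proof.
rewrite [leRHS]/Num.Def.normr /= mx_normrE.
exact: (le_bigmax _ (fun ij : 'I_m * 'I_n => `|P ij.1 ij.2|) (i, j)).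
Qed.

Lemma mx_norm_le m n (P : 'M[R]_(m, n)) c :
  0 <= c -> (forall i j, `|P i j| <= c) -> `|P| <= c.
Proof.
move=> c_ge0 Pc; rewrite [leLHS]/Num.Def.normr /= mx_normrE.
by apply: bigmax_le => // ij _; apply: Pc.
Qed.

Lemma mx_norm_mul m n p (P : 'M[R]_(m, n)) (Q : 'M[R]_(n, p)) :
  `|P *m Q| <= n%:R * `|P| * `|Q|.
Proof.
apply: mx_norm_le => [|i j]; first by rewrite !mulr_ge0.
rewrite mxE (le_trans (ler_norm_sum _ _ _)) //.
apply: (@le_trans _ _ (\sum_(k < n) `|P| * `|Q|)).
  by apply: ler_sum => k _; rewrite normrM ler_pM ?mx_norm_entry.
by rewrite sumr_const card_ord -mulrA mulr_natl.
Qed.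

Lemma mx_norm_exp d (X : 'M[R]_d) k : `|X ^+ k| <= (d%:R * `|X|) ^+ k.
Proof.
elim: k => [|k IH].
  rewrite expr0; apply: mx_norm_le => // i j.
  by rewrite -idmxE mxE; case: (i == j); rewrite ?normr1 ?normr0.
rewrite exprS [leRHS]exprS -mulmxE (le_trans (mx_norm_mul _ _)) //.
by rewrite ler_wpM2l ?mulr_ge0.
Qed.

End MatrixNorm.

Lemma cvg0_norm_le (R : realType) (V : normedModType R) {T : Type} {F : set_system T}
    {FF : Filter F} (u : T -> V) (r : T -> R) :
  (forall x, `|u x| <= r x) -> r @ F --> (0 : R) -> u @ F --> (0 : V).
Proof.
move=> ur r0; apply/norm_cvg0P.
apply: (squeeze_cvgr _ (cvg_cst 0) r0); apply: nearW => x.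
by rewrite normr_ge0 ur.
Qed.

Lemma cvg_mulmx (R : realType) m n p (u : nat -> 'M[R]_(m, n)) (v : nat -> 'M[R]_(n, p))
    (P : 'M[R]_(m, n)) (Q : 'M[R]_(n, p)) :
  u @ \oo --> P -> v @ \oo --> Q -> (fun k => u k *m v k) @ \oo --> P *m Q.
Proof.
move=> uP vQ.
suff gap0 : (fun k => u k *m v k - P *m Q) @ \oo --> (0 : 'M[R]_(m, p)).
  exact: cvg_sub0 gap0 (cvg_cst _).
have uP0 : (fun k => `|u k - P|) @ \oo --> (0 : R) by apply/norm_cvg0P/subr_cvg0.
have vQ0 : (fun k => `|v k - Q|) @ \oo --> (0 : R) by apply/norm_cvg0P/subr_cvg0.
have vQ_bnd : `|v k - Q| + `|Q| @[k --> \oo] --> (0 + `|Q| : R).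
  by apply: cvgD => //; apply: cvg_cst.
have r0 := cvgD (cvgMl_tmp (a := n%:R) (cvgM uP0 vQ_bnd))
                (cvgMl_tmp (a := n%:R * `|P|) vQ0).
rewrite mul0r !mulr0 addr0 in r0.
apply: cvg0_norm_le => [k|]; last exact: r0.
have -> : u k *m v k - P *m Q = (u k - P) *m v k + P *m (v k - Q).
  by rewrite mulmxBl mulmxBr addrA subrK.
apply: le_trans (ler_normD _ _) _; apply: lerD; last exact: mx_norm_mul.
rewrite /= mulrA (le_trans (mx_norm_mul _ _)) // ler_wpM2l ?mulr_ge0 //.
by rewrite -[in leLHS](subrK Q (v k)) ler_normD.
Qed.

(* Joins the completeness and normed-module structures of matrices, for [normed_cvg]. *)
HB.instance Definition _ (R : realType) (m n : nat) := Complete.on 'M[R]_(m, n).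

Section MatrixExponential.
Variables (R : realType) (d : nat).
Implicit Types X Y : 'M[R]_d.

Definition mexp_term X (k : nat) : 'M[R]_d := (k`!%:R)^-1 *: X ^+ k.

Lemma mexp_term_binomial X Y : GRing.comm X Y ->
  mexp_term (X + Y) = cauchy (mexp_term X) (mexp_term Y).
Proof.
move=> cXY; apply: funext => k.
rewrite /mexp_term /cauchy addrC (exprDn_comm _ (commr_sym cXY)) scaler_sumr.
apply: eq_bigr => i _; rewrite (commrX i (commr_sym (commrX (k - i) cXY))).
rewrite -[_ *+ 'C(k, i)]scaler_nat scalerA (@fact_inv_binomial _ k i (ltn_ord i)).
by rewrite -!mulmxE -scalemxAl -scalemxAr scalerA.
Qed.

Lemma mx_norm_mexp_term X k : `|mexp_term X k| <= exp_coeff (d%:R * `|X|) k.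
Proof.
rewrite normrZ /exp_coeff /= ger0_norm ?invr_ge0 // mulrC.
by rewrite ler_wpM2r ?invr_ge0 ?mx_norm_exp.
Qed.

Lemma is_cvg_series_mexp_term X : cvgn (series (mexp_term X)).
Proof.
apply: normed_cvg; apply: (series_le_cvg _ _ _ (is_cvg_series_exp_coeff (d%:R * `|X|))).
- by move=> k /=.
- by move=> k; apply: exp_coeff_ge0; rewrite mulr_ge0.
- exact: mx_norm_mexp_term.
Qed.

Lemma cvg_series_mexp_term X : series (mexp_term X) @ \oo --> mexp X.
Proof. exact: is_cvg_series_mexp_term. Qed.

Lemma mexp0 : mexp (0 : 'M[R]_d) = 1.
Proof.
apply: (cvg_lim (@norm_hausdorff _ _)); apply: cvg_near_cst; near=> n.
have n_gt0 : (0 < n)%N by near: n; exists 1%N.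
rewrite /series /= -(prednK n_gt0) big_nat_recl // expr0 fact0 invr1 scale1r.
by rewrite big1 ?addr0 // => i _; rewrite expr0n scaler0.
Unshelve. all: by end_near.
Qed.

Lemma mx_norm_series_mulB_cauchy X Y n (a := d%:R * `|X|) (b := d%:R * `|Y|) :
  `|series (mexp_term X) n * series (mexp_term Y) n
    - series (cauchy (mexp_term X) (mexp_term Y)) n|
  <= d%:R * (series (exp_coeff a) n * series (exp_coeff b) n
             - series (cauchy (exp_coeff a) (exp_coeff b)) n).
Proof.
rewrite !series_mulB_cauchy mulr_sumr.
apply: le_trans (ler_norm_sum _ _ _) _; apply: ler_sum => i _.
rewrite mulr_sumr; apply: le_trans (ler_norm_sum _ _ _) _; apply: ler_sum => j _.
rewrite -mulmxE (le_trans (mx_norm_mul _ _)) // -mulrA ler_wpM2l //.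
by rewrite ler_pM ?mx_norm_mexp_term.
Qed.

Lemma mexpD X Y : GRing.comm X Y -> mexp (X + Y) = mexp X * mexp Y.
Proof.
(* The gap between the product of the partial sums and the partial sums of the
   Cauchy product is dominated by the same gap for the scalar series of
   exp (d |X|) and exp (d |Y|), which vanishes in the limit by expRD. *)
move=> cXY; set a := d%:R * `|X|; set b := d%:R * `|Y|.
pose P n := series (mexp_term X) n * series (mexp_term Y) n.
have gap0 : (fun n => P n - series (mexp_term (X + Y)) n) @ \oo --> (0 : 'M[R]_d).
  apply: cvg0_norm_le => [n|]; first by rewrite mexp_term_binomial //;
    exact: mx_norm_series_mulB_cauchy.
  rewrite -(mulr0 d%:R) -(subrr (expR (a + b))) {1}expRD -exp_coeff_binomial.
  apply: cvgMl_tmp; apply: cvgB; last exact: is_cvg_series_exp_coeff.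
  by apply: cvgM; apply: is_cvg_series_exp_coeff.
apply: (cvg_lim (@norm_hausdorff _ _)).
have -> : series (mexp_term (X + Y)) = fun n => P n - (P n - series (mexp_term (X + Y)) n).
  by apply: funext => n; rewrite subKr.
rewrite -[mexp X * mexp Y]subr0; apply: cvgB gap0.
by have := cvg_mulmx (cvg_series_mexp_term (X := X)) (cvg_series_mexp_term (X := Y)); rewrite mulmxE.
Qed.

Lemma mexp_mulN X : mexp X * mexp (- X) = 1.
Proof. by rewrite -mexpD ?subrr ?mexp0 //; apply: commrN. Qed.

End MatrixExponential.

Section LambdaSpan.
Variables (R : realType) (d M : nat) (gam : R) (A : 'I_M.+1 -> 'M[R]_d).

Definition Lcomb (al : R) (be : 'I_M.+1 -> R) : 'M[R]_d :=
  al *: Lam gam A + \sum_(m < M.+1 | (0 < m)%N) be m *: A m.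

Lemma LcombD al be al' be' :
  Lcomb al be + Lcomb al' be' = Lcomb (al + al') (fun m => be m + be' m).
Proof.
rewrite /Lcomb scalerDl addrACA; congr (_ + _).
by rewrite -big_split; apply: eq_bigr => m _; rewrite scalerDl.
Qed.

Lemma commr_scalemx (P Q : 'M[R]_d) c : GRing.comm P Q -> GRing.comm P (c *: Q).
Proof. by rewrite /GRing.comm -!mulmxE -scalemxAl -scalemxAr => ->. Qed.

Lemma comm_Lcomb P al be : GRing.comm P (Lam gam A) ->
  (forall m, GRing.comm P (A m)) -> GRing.comm P (Lcomb al be).
Proof.
move=> PLam PA; apply: commrD; first exact: commr_scalemx.
by apply: commr_sum => m _; apply: commr_scalemx.
Qed.

Hypothesis A_comm : forall m m', GRing.comm (A m) (A m').

Lemma comm_A_Lam m : GRing.comm (A m) (Lam gam A).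
Proof.
apply: commrB; first exact: A_comm.
by apply: commr_scalemx; apply: commr_sum => k _; apply: commrX.
Qed.

Lemma Lcomb_comm al be al' be' : GRing.comm (Lcomb al be) (Lcomb al' be').
Proof.
have Lam_comm : GRing.comm (Lam gam A) (Lcomb al be).
  by apply: comm_Lcomb => // m; apply: commr_sym; apply: comm_A_Lam.
apply: comm_Lcomb => [|m]; apply: commr_sym; first exact: Lam_comm.
by apply: comm_Lcomb => [|k]; [apply: comm_A_Lam | apply: A_comm].
Qed.

End LambdaSpan.

Section GlobalToLocal.
Variables (R : realType) (d M s N : nat) (t0 T gam : R).
Variables (A : 'I_M.+1 -> 'M[R]_d) (g : 'I_M.+1 -> R -> 'cV[R]_d -> 'cV[R]_d).
Variables (Z : nat -> 'I_M.+1 -> 'I_s -> 'I_s -> R) (z : nat -> 'I_M.+1 -> 'I_s -> R).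
Variable W0 : 'I_M.+1 -> R.
Hypothesis A_comm : forall m m', GRing.comm (A m) (A m').

Local Notation Lbar := (Lbar N t0 T gam A W0).
Local Notation L0st := (L0st N t0 T gam A Z W0).
Local Notation DLst := (DLst gam A Z).
Local Notation DL := (DL gam A z).

Lemma Lbar0 : Lbar W0 0 = 0.
Proof.
rewrite /Defs.Lbar /tgrid mul0r addr0 subrr scale0r add0r.
by rewrite big1 // => m _; rewrite subrr scale0r.
Qed.

Lemma L0stE W n j : L0st W n j = Lbar W n + DLst n j.
Proof.
rewrite (LcombD gam A); congr (_ + _); first by rewrite addrAC.
by apply: eq_bigr => m _; rewrite addrAC.
Qed.

Lemma Lbar_succ W n : cw z n ord0 = step_h N t0 T ->
  Lbar (fun m => W m + cw z n m) n.+1 = DL n + Lbar W n.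
Proof.
move=> c0; rewrite (LcombD gam A); congr (_ + _).
  by rewrite c0 /tgrid -addn1 natrD mulrDl mul1r; congr (_ *: _); ring.
by apply: eq_bigr => m _; rewrite addrAC addrC.
Qed.

Lemma comm_Lbar_DLst W n j : GRing.comm (Lbar W n) (DLst n j).
Proof. exact: Lcomb_comm. Qed.

Lemma mexp_L0st W n j : mexp (L0st W n j) = mexp (DLst n j) *m mexp (Lbar W n).
Proof.
by rewrite mulmxE L0stE addrC (@mexpD _ _ (DLst n j)) //; apply: commr_sym; apply: comm_Lbar_DLst.
Qed.

Lemma mexp_Lbar_mulN_L0st W n j :
  mexp (Lbar W n) *m mexp (- L0st W n j) = mexp (- DLst n j).
Proof.
rewrite mulmxE L0stE opprD (@mexpD _ _ (- Lbar W n)); last first.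
  by apply/commrN/commr_sym/commrN/commr_sym/comm_Lbar_DLst.
by rewrite mulrA mexp_mulN mul1r.
Qed.

Lemma global_incrE W n coef Hs :
  mexp (Lbar W n) *m global_incr N t0 T gam A g Z W0 W n coef Hs =
  local_incr N t0 T gam A g Z n coef (fun j => mexp (Lbar W n) *m Hs j).
Proof.
rewrite mulmx_sumr; apply: eq_bigr => j _; rewrite mulmx_sumr; apply: eq_bigr => m _.
by rewrite -scalemxAr [in LHS]mulmxA mexp_Lbar_mulN_L0st mexp_L0st -[in LHS]mulmxA.
Qed.

Lemma global_stage_eq_local W n v Hs :
  global_stage_eq N t0 T gam A g Z W0 W n v Hs ->
  local_stage_eq N t0 T gam A g Z n (mexp (Lbar W n) *m v) (fun j => mexp (Lbar W n) *m Hs j).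
Proof. by move=> Hs_eq i; rewrite {1}Hs_eq mulmxDr global_incrE. Qed.

Lemma global_update_local W n v Hs : cw z n ord0 = step_h N t0 T ->
  mexp (Lbar (fun m => W m + cw z n m) n.+1) *m global_update N t0 T gam A g Z z W0 W n v Hs =
  local_update N t0 T gam A g Z z n (mexp (Lbar W n) *m v) (fun j => mexp (Lbar W n) *m Hs j).
Proof.
move=> c0; rewrite Lbar_succ // (@mexpD _ _ (DL n)); last exact: Lcomb_comm.
by rewrite -mulmxE -mulmxA mulmxDr global_incrE.
Qed.

End GlobalToLocal.

Theorem lemma4 (R : realType) (d M s N : nat) (t0 T gam : R)
  (A : 'I_M.+1 -> 'M[R]_d) (g : 'I_M.+1 -> R -> 'cV[R]_d -> 'cV[R]_d)
  (Z : nat -> 'I_M.+1 -> 'I_s -> 'I_s -> R) (z : nat -> 'I_M.+1 -> 'I_s -> R)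
  (x0 : 'cV[R]_d) (W0 : 'I_M.+1 -> R)
  (* local scheme: approximations Y n and stage values H n *)
  (Y : nat -> 'cV[R]_d) (H : nat -> 'I_s -> 'cV[R]_d)
  (* global scheme: V0 n = V^0_n, W n = W^n, stage values H0 n *)
  (V0 : nat -> 'cV[R]_d) (W : nat -> 'I_M.+1 -> R) (H0 : nat -> 'I_s -> 'cV[R]_d) :
  (0 < N)%N -> t0 < T ->
  (gam = 1 / 2 \/ gam = 0) ->
  (forall m m' : 'I_M.+1, A m *m A m' = A m' *m A m) ->
  (forall n, (n < N)%N -> cw z n ord0 = step_h N t0 T) ->
  (* local SRK Lawson scheme *)
  Y 0%N = x0 ->
  (forall n, (n < N)%N ->
     local_stage_eq N t0 T gam A g Z n (Y n) (H n) /\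
     (forall Hs, local_stage_eq N t0 T gam A g Z n (Y n) Hs -> forall i, Hs i = H n i) /\
     Y n.+1 = local_update N t0 T gam A g Z z n (Y n) (H n)) ->
  (* global SRK Lawson scheme *)
  W0 ord0 = t0 -> W 0%N = W0 -> V0 0%N = x0 ->
  (forall n, (n < N)%N ->
     global_stage_eq N t0 T gam A g Z W0 (W n) n (V0 n) (H0 n) /\
     (forall Hs, global_stage_eq N t0 T gam A g Z W0 (W n) n (V0 n) Hs ->
        forall i, Hs i = H0 n i) /\
     V0 n.+1 = global_update N t0 T gam A g Z z W0 (W n) n (V0 n) (H0 n) /\
     (forall m, W n.+1 m = W n m + cw z n m)) ->
  forall n, (n <= N)%N ->
    mexp (Lbar N t0 T gam A W0 (W n) n) *m V0 n = Y n.
Proof.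
(* The identity is algebraic: N > 0, t0 < T, the value of gam and W0 0 = t0 play no role. *)
move=> _ _ _ A_comm c0 Y0 local _ W_0 V0_0 global.
elim=> [_|n IH n_lt]; first by rewrite W_0 Lbar0 mexp0 mul1mx V0_0 Y0.
have [_ [H_uniq Y_succ]] := local n n_lt.
have [H0_stage [_ [V0_succ W_succ]]] := global n n_lt.
pose E := mexp (Lbar N t0 T gam A W0 (W n) n).
have H_E : H n = fun j => E *m H0 n j.
  apply: funext => i; symmetry; apply: (H_uniq (fun j => E *m H0 n j)).
  by rewrite -(IH (ltnW n_lt)); have := global_stage_eq_local A_comm H0_stage; apply.
rewrite Y_succ V0_succ (funext W_succ).
by rewrite global_update_local ?c0 // H_E IH // ltnW.
Qed.
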